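(* Let $(X,\mu)$ and $(Y,\nu)$ be $\sigma$-finite measure spaces and let $\tau:Y\to X$ be a measurable nonsingular map (i.e. $\nu(\tau^{-1}(E))=0$ for every $\mu$-null set $E$). Let $0<p,q<\infty$ and let $\Phi:[0,\infty)\to[0,\infty)$ be such that $t\mapsto\Phi(t^{1/q})$ is a Young function. Then the composition operator $C_\tau f=f\circ\tau$ is bounded from $L^{p,q}(X,\mu)$ to $L^\Phi(Y,\nu)$ if and only if there exists a constant $D\ge1$ such that for all $\mu$-measurable sets $E\subset X$, \[ \nu(\tau^{-1}(E))\le\left\{\Phi\left(\frac{1}{D\mu(E)^{1/p}}\right)\right\}^{-1}. \]
   Context: A Young function is a map $\Psi:[0,\infty)\to[0,\infty)$ that is positive on $(0,\infty)$, convex, and satisfies $\lim_{t\downarrow0}\Psi(t)=\Psi(0)=0$. The Orlicz space $L^\Phi(Y,\nu)$ (for $\Phi$ with $\Phi((\cdot)^{1/q})$ a Young function) consists of measurable $g$ on $Y$ with $\int_Y\Phi(\epsilon|g|)\,d\nu<\infty$ for every $\epsilon>0$, with quasi-norm $\|g\|_{L^\Phi(Y)}=\inf\{\lambda>0:\int_Y\Phi(|g(y)|/\lambda)\,d\nu(y)\le1\}$. The Lorentz space $L^{p,q}(X,\mu)$ consists of measurable $f$ with $\|f\|_{L^{p,q}(X)}=\left(\int_0^\infty\left[t\,\mu(\{x:|f(x)|>t\})^{1/p}\right]^q\frac{dt}{t}\right)^{1/q}<\infty$. Boundedness means $\|C_\tau f\|_{L^\Phi(Y)}\le C\|f\|_{L^{p,q}(X)}$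 for some $C$ and all $f$. Conventions $1/0=\infty$, $\Phi(\infty)=\infty$, $1/\infty=0$ are used when $\mu(E)\in\{0,\infty\}$. *)

From HB Require Import structures.
From mathcomp Require Import all_boot all_order all_algebra.
From mathcomp Require Import all_classical all_reals all_analysis.
Set Implicit Arguments. Unset Strict Implicit. Unset Printing Implicit Defensive.
Import Order.TTheory GRing.Theory Num.Theory.
Import numFieldNormedType.Exports.
Local Open Scope classical_set_scope.
Local Open Scope ring_scope.

(* Young function Psi : [0,oo) -> [0,oo) (values on negative reals are irrelevant):
   nonnegative on [0,oo), positive on (0,oo), convex on [0,oo),
   Psi 0 = 0 and Psi t -> 0 as t -> 0+. *)
Definition young_function {R : realType} (Psi : R -> R) : Prop :=
  [/\ forall t, 0 <= t -> 0 <= Psi t,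
      forall t, 0 < t -> 0 < Psi t,
      forall x y l, 0 <= x -> 0 <= y -> 0 <= l -> l <= 1 ->
        Psi (l * x + (1 - l) * y) <= l * Psi x + (1 - l) * Psi y,
      Psi 0 = 0 &
      Psi t @[t --> 0^'+] --> 0].

Local Open Scope ereal_scope.

Definition lorentz_norm {d} {X : measurableType d} {R : realType}
  (mu : {measure set X -> \bar R}) (p q : R) (f : X -> R) : \bar R :=
  (\int[@lebesgue_measure R]_(t in `]0%R, +oo[%classic)
     (((t%:E * (mu [set x | (t < `|f x|)%R]) `^ (p^-1)) `^ q) * (t^-1)%:E))
  `^ (q^-1).

Definition in_lorentz {d} {X : measurableType d} {R : realType}
  (mu : {measure set X -> \bar R}) (p q : R) (f : X -> R) : Prop :=
  measurable_fun setT f /\ lorentz_norm mu p q f < +oo.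

Definition in_orlicz {d} {Y : measurableType d} {R : realType}
  (nu : {measure set Y -> \bar R}) (Phi : R -> R) (g : Y -> R) : Prop :=
  measurable_fun setT g /\
  forall eps : R, (0 < eps)%R ->
    \int[nu]_(y in setT) (Phi (eps * `|g y|))%:E < +oo.

Definition orlicz_norm {d} {Y : measurableType d} {R : realType}
  (nu : {measure set Y -> \bar R}) (Phi : R -> R) (g : Y -> R) : \bar R :=
  ereal_inf [set lam%:E | lam in
    [set lam : R | (0 < lam)%R /\
       \int[nu]_(y in setT) (Phi (`|g y| / lam))%:E <= 1]].

(* The bound {Phi(1/(D mu(E)^(1/p)))}^(-1), with the conventions
   1/0 = oo, Phi(oo) = oo, 1/oo = 0 (and 1/0 = oo if Phi vanishes). *)
Definition measure_bound {R : realType} (Phi : R -> R) (p D : R) (m : \bar R)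
  : \bar R :=
  match m with
  | r%:E => if r == 0%R then 0
            else let s := Phi (1 / (D * r `^ (p^-1)))%R in
                 if s == 0%R then +oo else (s^-1)%:E
  | +oo => +oo
  | -oo => +oo
  end.

From HB Require Import structures.
From mathcomp Require Import all_boot all_order all_algebra.
From mathcomp Require Import all_classical all_reals all_analysis.
From mathcomp Require Import zify ring lra.
From mathcomp Require Import measurable_realfun.
Import Order.TTheory GRing.Theory Num.Theory.
Import numFieldNormedType.Exports.
Local Open Scope classical_set_scope.
Local Open Scope ring_scope.

(* Both directions rest on a dyadic discretisation.  Writing
   b_k = (2^k mu(|f| > 2^k)^(1/p))^q, the Lorentz integral of f is comparable to
   sum_k b_k: on (2^(k-1), 2^k] the integrand is squeezed between values of the
   nonincreasing distribution function at the endpoints.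
   Necessity: test the operator on indicators.  ||1_E||_(p,q) <= c mu(E)^(1/p),
   and ||1_F||_Phi < a forces Phi(1/a) nu(F) <= 1, which is the stated bound
   once Phi is known to be nondecreasing.
   Sufficiency: cut Y into the shells 2^k < |f o tau| <= 2^(k+1), which lie in
   tau^-1 {|f| > 2^k}.  Since Phi(t^(1/q)) is convex and vanishes at 0,
   Phi(l x) <= l^q Phi(x) for l in [0,1]; with the measure condition this bounds
   the k-th term of the modular int Phi(eps |f o tau|) by (2 eps D)^q b_k whenever
   the latter is at most 1.  For eps ~ 1/||f||_(p,q) this holds for every k and
   gives the norm bound; for arbitrary eps it holds for all but finitely many k,
   since b_k -> 0, which gives membership in L^Phi. *)

Lemma powR_le1 {R : realType} (l r : R) : 0 <= r -> 0 <= l <= 1 -> l `^ r <= 1.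
Proof.
move=> r0 /andP[l0 l1]; have := @ge0_ler_powR _ r r0 l 1.
by rewrite !nnegrE powR1 => ->.
Qed.

Lemma ge0_lee_poweR {R : realType} (r : R) (x y : \bar R) :
  0 <= r -> (0 <= x)%E -> (x <= y)%E -> (x `^ r <= y `^ r)%E.
Proof.
move=> r0 x0 xy; apply: gt0_ler_poweR; rewrite ?in_itv /= ?leey ?x0 //.
by rewrite (le_trans x0 xy).
Qed.

Section nonneg_series.
Context {R : realType}.
Local Open Scope ereal_scope.
Implicit Types u v : (\bar R)^nat.

Lemma term_le_nneseries_tail u n : (forall k, 0 <= u k) ->
  u n <= \sum_(n <= k <oo) u k.
Proof.
move=> u0; have := @nneseries_lim_ge R u xpredT n n.+1 (fun k _ _ => u0 k).
by rewrite big_nat1.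
Qed.

Lemma nneseries_tail_le u N : (forall k, 0 <= u k) ->
  \sum_(N <= k <oo) u k <= \sum_(k <oo) u k.
Proof.
move=> u0; rewrite (@nneseries_split R u 0 N) // add0n.
by rewrite leeDr // sume_ge0.
Qed.

Lemma term_le_nneseries u n : (forall k, 0 <= u k) -> u n <= \sum_(k <oo) u k.
Proof.
by move=> u0; exact: le_trans (term_le_nneseries_tail _ n u0) (nneseries_tail_le _ n u0).
Qed.

Lemma nneseries_term_cvg0 u : (forall k, 0 <= u k) -> \sum_(k <oo) u k < +oo ->
  u n @[n --> \oo] --> 0.
Proof.
move=> u0 ulty.
apply: (@squeeze_cvge _ _ _ _ (cst 0) _ (fun n => \sum_(n <= k <oo) u k)).
- by apply: nearW => n; rewrite u0 term_le_nneseries_tail.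
- exact: cvg_cst.
- exact: nneseries_tail_cvg.
Qed.

Lemma nneseries_lty_near_le u v : (forall k, 0 <= u k) -> (forall k, u k < +oo) ->
  (forall k, 0 <= v k) -> \sum_(k <oo) v k < +oo ->
  (\forall k \near \oo, u k <= v k) -> \sum_(k <oo) u k < +oo.
Proof.
move=> u0 ulty v0 vlty [N _ uv].
rewrite (@nneseries_split R u 0 N) // add0n; apply: lte_add_pinfty.
  by apply: lte_sum_pinfty => k _.
apply: le_lt_trans vlty; apply: (le_trans _ (nneseries_tail_le v N v0)).
rewrite eseries_cond [in leRHS]eseries_cond.
by apply: lee_nneseries => [k _ _|k /= /uv //]; exact: u0.
Qed.

Lemma geometric_nneseries_le (a z : R) : (0 <= a)%R -> (0 < z < 1)%R ->
  \sum_(n <oo) (a * z ^+ n)%:E <= (a / (1 - z))%:E.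
Proof.
move=> a0 /andP[z0 z1]; apply: lime_le.
  by apply: is_cvg_nneseries => n _ _; rewrite lee_fin mulr_ge0 // exprn_ge0 // ltW.
apply: nearW => n; rewrite sumEFin lee_fin.
by apply: geometric_le_lim; rewrite // ger0_norm // ltW.
Qed.

Lemma nneseries_indic_ge {T} (S : (set T)^nat) (c : (\bar R)^nat) m x :
  (forall n, 0 <= c n) -> S m x -> c m <= \sum_(n <oo) (c n * (\1_(S n) x)%:E).
Proof.
move=> c0 Smx; apply: le_trans (term_le_nneseries _ m _).
  by rewrite indicE mem_set // mule1.
by move=> n; rewrite mule_ge0 // lee_fin indic_ge0.
Qed.

Lemma nneseries_indic_single {T} (S : (set T)^nat) (c : (\bar R)^nat) m x :
  (forall n, 0 <= c n) -> (forall n, S n x -> n = m) -> S m x ->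
  \sum_(n <oo) (c n * (\1_(S n) x)%:E) = c m.
Proof.
move=> c0 Sm Smx.
rewrite (@nneseriesD1 _ _ m xpredT) //; last first.
  by move=> n _; rewrite mule_ge0 // lee_fin indic_ge0.
rewrite indicE mem_set // mule1 eseries0 ?adde0 // => n _ /= nm.
rewrite indicE; case: (boolP (x \in S n)) => [/set_mem/Sm nmE|_]; last by rewrite mule0.
by rewrite nmE eqxx in nm.
Qed.

End nonneg_series.

Section nonneg_integral.
Context {d} {T : measurableType d} {R : realType} (mu : {measure set T -> \bar R}).
Local Open Scope ereal_scope.

(* The nonnegative integral is a supremum over simple minorants, so it is
   monotone even for nonmeasurable integrands such as the Lorentz one. *)
Lemma ge0_le_integral_nonmeas (D : set T) (f g : T -> \bar R) :
  (forall x, D x -> 0 <= f x) -> (forall x, D x -> f x <= g x) ->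
  \int[mu]_(x in D) f x <= \int[mu]_(x in D) g x.
Proof.
move=> f0 fg.
have g0 x : D x -> 0 <= g x by move=> Dx; exact: le_trans (f0 _ Dx) (fg _ Dx).
rewrite !ge0_integralE //; apply: ereal_sup_le => _ [h /= hf <-].
exists h => //= x; apply: le_trans (hf x) _.
by rewrite /patch; case: ifPn => // /set_mem; exact: fg.
Qed.

Lemma ge0_integral_indic_series (D : set T) (S : (set T)^nat) (c : (\bar R)^nat) :
  measurable D -> (forall n, measurable (S n)) -> (forall n, S n `<=` D) ->
  (forall n, 0 <= c n) ->
  \int[mu]_(x in D) \sum_(n <oo) (c n * (\1_(S n) x)%:E) =
  \sum_(n <oo) (c n * mu (S n)).
Proof.
move=> mD mS SD c0; rewrite integral_nneseries //; last 2 first.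
- by move=> n; apply/measurable_funeM/measurable_EFinP/measurable_indic.
- by move=> n x _; rewrite mule_ge0 // lee_fin indic_ge0.
apply: eq_eseriesr => n _; rewrite ge0_integralZl ?integral_indic ?setIidl //.
exact/measurable_EFinP/measurable_indic.
Qed.

End nonneg_integral.

Section young_power.
Context {R : realType} {q : R} {Phi : R -> R}.
Hypotheses (q_gt0 : 0 < q) (Phi_young : young_function (fun t => Phi (t `^ q^-1))).

Let powRK x : 0 <= x -> (x `^ q) `^ q^-1 = x.
Proof. by move=> x0; rewrite -powRrM mulfV ?gt_eqF// powRr1. Qed.

Lemma Phi0 : Phi 0 = 0.
Proof. by case: Phi_young => _ _ _ + _; rewrite powR0 // invr_eq0 gt_eqF. Qed.

Lemma Phi_ge0 x : 0 <= x -> 0 <= Phi x.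
Proof.
by move=> x0; case: Phi_young => + _ _ _ _ => /(_ (x `^ q) (powR_ge0 _ _)); rewrite powRK.
Qed.

Lemma Phi_gt0 x : 0 < x -> 0 < Phi x.
Proof.
move=> x0; case: Phi_young => _ + _ _ _ => /(_ (x `^ q) (powR_gt0 _ x0)).
by rewrite powRK // ltW.
Qed.

(* Convexity of [Phi (_ `^ q^-1)] between [0] and [x `^ q] with weight [l `^ q]. *)
Lemma Phi_scale l x : 0 <= l <= 1 -> 0 <= x -> Phi (l * x) <= l `^ q * Phi x.
Proof.
move=> /andP[l0 l1] x0; have lq1 : l `^ q <= 1 by rewrite powR_le1 ?l0 // ltW.
case: Phi_young => _ _ + P0 _ => /(_ (x `^ q) 0 (l `^ q) (powR_ge0 _ _) (lexx _)).
move=> /(_ (powR_ge0 _ _) lq1); rewrite P0 !mulr0 !addr0 -powRM // powRK //.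
  by rewrite powRK.
exact: mulr_ge0.
Qed.

Lemma Phi_nondecreasing x y : 0 <= x -> x <= y -> Phi x <= Phi y.
Proof.
move=> x0 xy; have [y0|y0] := eqVneq y 0.
  by rewrite y0 in xy *; have -> : x = 0 by apply/eqP; rewrite eq_le x0 xy.
have yp : 0 < y by rewrite lt_neqAle eq_sym y0 (le_trans x0 xy).
have xy01 : 0 <= x / y <= 1 by rewrite divr_ge0 ?ler_pdivrMr ?mul1r // ltW.
rewrite -[x](divfK y0); apply: le_trans (Phi_scale _ _ xy01 (ltW yp)) _.
by rewrite ler_piMl ?Phi_ge0 ?powR_le1 // ltW.
Qed.

End young_power.

Definition int_of_nat (n : nat) : int :=
  if (n %% 2 == 0)%N then (n %/ 2)%:Z else - (n %/ 2).+1%:Z.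

Lemma int_of_nat_inj : injective int_of_nat.
Proof. by move=> m n; rewrite /int_of_nat; case: ifP; case: ifP => *; lia. Qed.

Lemma int_of_nat_surj (k : int) : exists n, int_of_nat n = k.
Proof.
rewrite /int_of_nat; case: k => a.
- exists a.*2; have -> : (a.*2 %% 2 == 0)%N by lia.
  by congr Posz; lia.
- exists a.*2.+1; rewrite NegzE; have -> : (a.*2.+1 %% 2 == 0)%N = false by lia.
  by congr (- Posz _); lia.
Qed.

Lemma int_of_nat_le0 n : int_of_nat n <= 0 -> 2 * int_of_nat n <= - n%:Z.
Proof. by rewrite /int_of_nat; case: ifP => *; lia. Qed.

Section dyadic.
Context {R : realType}.

Let pow2 (k : int) : R := 2 `^ k%:~R.

Let pow2S k : pow2 (k + 1) = 2 * pow2 k.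
Proof. by rewrite /pow2 intrD powRD ?pnatr_eq0 ?implybT // powRr1 // mulrC. Qed.

Let pow2_le k l : k <= l -> pow2 k <= pow2 l.
Proof. by move=> kl; rewrite /pow2 ler_powR ?ler1n // ler_int. Qed.

Definition dyadic (n : nat) : R := pow2 (int_of_nat n).

Lemma dyadic_gt0 n : 0 < dyadic n.
Proof. by rewrite powR_gt0. Qed.

Lemma exists_dyadic (t : R) : 0 < t -> exists n, dyadic n < t <= 2 * dyadic n.
Proof.
move=> t0; have l2 : 0 < ln (2 : R) by rewrite ln_gt0 // ltr1n.
have [n nk] := int_of_nat_surj (Num.ceil (ln t / ln 2) - 1); exists n.
rewrite /dyadic -pow2S nk subrK.
have /andP[h1 h2] := real_ceil_itv (num_real (ln t / ln 2)).
have E k : pow2 k = expR (k%:~R * ln 2) by rewrite /pow2 /powR pnatr_eq0.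
rewrite !E -[t in _ < t <= _](lnK t0) ltr_expR ler_expR.
by rewrite -ltr_pdivlMr // -ler_pdivrMr // h1 h2.
Qed.

Lemma dyadic_unique m n (t : R) : dyadic m < t <= 2 * dyadic m ->
  dyadic n < t <= 2 * dyadic n -> m = n.
Proof.
rewrite /dyadic -!pow2S => /andP[m1 m2] /andP[n1 n2]; apply: int_of_nat_inj.
case: (ltgtP (int_of_nat m) (int_of_nat n)) => // mn; exfalso.
- suff : pow2 (int_of_nat m + 1) <= pow2 (int_of_nat n).
    by move/(le_trans m2)/(lt_le_trans n1); rewrite ltxx.
  by apply: pow2_le; rewrite lezD1.
- suff : pow2 (int_of_nat n + 1) <= pow2 (int_of_nat m).
    by move/(le_trans n2)/(lt_le_trans m1); rewrite ltxx.
  by apply: pow2_le; rewrite lezD1.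
Qed.

Lemma dyadic_lt1_powR (q : R) n : 0 <= q -> dyadic n < 1 ->
  dyadic n `^ q <= (2 `^ (- q / 2)) ^+ n.
Proof.
move=> q0 n1; have k0 : int_of_nat n <= 0.
  rewrite leNgt; apply/negP => /ltW /pow2_le; rewrite /pow2 powRr0.
  by move/(lt_le_trans n1); rewrite ltxx.
rewrite -powRrM -powR_mulrn ?powR_ge0 // -powRrM ler_powR ?ler1n //.
have := int_of_nat_le0 _ k0; rewrite -(ler_int R) intrM intrN !pmulrn.
set k := (int_of_nat n)%:~R; nra.
Qed.

End dyadic.

Lemma itv_oc_subset_pos {R : realType} (a b : R) : 0 <= a ->
  [set` `]a, b]] `<=` `]0, +oo[%classic.
Proof. by move=> a0 t /=; rewrite !in_itv /= andbT => /andP[/(le_lt_trans a0)]. Qed.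

Lemma lebesgue_measure_itv_oc {R : realType} (a b : R) : a < b ->
  lebesgue_measure [set` `]a, b]] = (b - a)%:E.
Proof. by move=> ab; rewrite lebesgue_measure_itv /= lte_fin ab -EFinB. Qed.

Section lorentz_dyadic.
Context {d} {X : measurableType d} {R : realType} (mu : {measure set X -> \bar R}).
Context (p q : R) (f : X -> R).
Hypotheses (p_gt0 : 0 < p) (q_gt0 : 0 < q) (mf : measurable_fun setT f).

Lemma measurable_superlevel (t : R) : measurable [set x | t < `|f x|].
Proof.
rewrite -[S in measurable S]setTI.
have -> : [set x | t < `|f x|] = (Num.norm \o f) @^-1` `]t, +oo[.
  by apply/seteqP; split => x /=; rewrite in_itv /= andbT.
exact: (measurableT_comp (@normr_measurable _ _) mf) (measurable_itv _).
Qed.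

Local Open Scope ereal_scope.

Definition distribution_fun (t : R) : \bar R := mu [set x | (t < `|f x|)%R].

Definition lorentz_term (t : R) : \bar R := (t%:E * distribution_fun t `^ p^-1) `^ q.

Definition lorentz_integral : \bar R :=
  \int[lebesgue_measure]_(t in `]0%R, +oo[%classic) (lorentz_term t * (t^-1)%:E).

Lemma lorentz_normE : lorentz_norm mu p q f = lorentz_integral `^ q^-1.
Proof. by []. Qed.

Lemma distribution_fun_nonincreasing (s t : R) : (s <= t)%R ->
  distribution_fun t <= distribution_fun s.
Proof.
move=> st; apply: le_measure; rewrite ?inE; try exact: measurable_superlevel.
by move=> x /= /(le_lt_trans st).
Qed.

Lemma lorentz_factor_le (a b : R) (M N : \bar R) : (0 <= a <= b)%R -> 0 <= M <= N ->
  (a%:E * M `^ p^-1) `^ q <= (b%:E * N `^ p^-1) `^ q.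
Proof.
move=> /andP[a0 ab] /andP[M0 MN].
apply: ge0_lee_poweR; [exact: ltW | by rewrite mule_ge0 ?poweR_ge0 |].
apply: lee_pmul; rewrite ?lee_fin ?poweR_ge0 //.
by apply: ge0_lee_poweR; rewrite // invr_ge0 ltW.
Qed.

Lemma lorentz_factorZ (c a : R) (M : \bar R) : (0 <= c)%R -> (0 <= a)%R ->
  ((c * a)%:E * M `^ p^-1) `^ q = (c `^ q)%:E * (a%:E * M `^ p^-1) `^ q.
Proof.
by move=> c0 a0; rewrite EFinM -muleA [LHS]poweRM ?mule_ge0 ?poweR_ge0.
Qed.

Lemma lorentz_term_ge0 (t : R) : 0 <= lorentz_term t.
Proof. exact: poweR_ge0. Qed.

Lemma distribution_fun_lty (t : R) : (0 < t)%R -> lorentz_term t < +oo ->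
  distribution_fun t < +oo.
Proof.
move=> t0; apply: contraTT; rewrite -leNgt leye_eq /lorentz_term => /eqP ->.
rewrite poweRyr ?invr_eq0 ?gt_eqF // mulry gtr0_sg // mul1e.
by rewrite poweRyr ?gt_eqF // ltxx.
Qed.

Lemma lorentz_integral_ge0 : 0 <= lorentz_integral.
Proof.
apply: integral_ge0 => t /=; rewrite in_itv /= andbT => t0.
by rewrite mule_ge0 ?lorentz_term_ge0 // lee_fin invr_ge0 ltW.
Qed.

Lemma dyadic_sum_le_lorentz_integral :
  ((2^-1) `^ q / 2)%:E * \sum_(n <oo) lorentz_term (dyadic n) <= lorentz_integral.
Proof.
have s0 n : (0 < dyadic n :> R)%R := dyadic_gt0 n.
pose J n : set R := [set` `]2^-1 * dyadic n, dyadic n]%R].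
pose c n := ((2^-1 * dyadic n)%:E * distribution_fun (dyadic n) `^ p^-1) `^ q *
            ((dyadic n)^-1)%:E.
have c0 n : 0 <= c n by rewrite mule_ge0 ?poweR_ge0 // lee_fin invr_ge0 (ltW (s0 n)).
rewrite -nneseriesZl; last by move=> n _; exact: lorentz_term_ge0.
have -> : \sum_(n <oo) (((2^-1) `^ q / 2)%:E * lorentz_term (dyadic n)) =
    \sum_(n <oo) (c n * lebesgue_measure (J n)).
  apply: eq_eseriesr => n _; rewrite lebesgue_measure_itv_oc; last by have := s0 n; lra.
  rewrite /c lorentz_factorZ ?(ltW (s0 n)) // -/(lorentz_term _).
  rewrite muleC (muleC (_ `^ q)%:E) -!muleA -!EFinM; congr (_ * _%:E).
  by field; rewrite gt_eqF.
rewrite -(ge0_integral_indic_series lebesgue_measure `]0%R, +oo[%classic) //; last 2 first.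
- by move=> n; exact: measurable_itv.
- by move=> n; apply: itv_oc_subset_pos; rewrite mulr_ge0 ?invr_ge0 ?(ltW (s0 n)).
apply: ge0_le_integral_nonmeas => t /=; rewrite in_itv /= andbT => t0.
  by apply: nneseries_ge0 => n _ _; rewrite mule_ge0 // lee_fin indic_ge0.
have Jt n : J n t <-> (dyadic n < 2 * t <= 2 * dyadic n)%R.
  by rewrite /J /= in_itv /= -ltr_pdivrMl // ler_pM2l // div1r.
have [n Jn] := exists_dyadic _ (mulr_gt0 (ltr0n _ 2) t0).
rewrite (@nneseries_indic_single _ _ _ _ n) //; last 2 first.
- by move=> m /Jt Jm; exact: dyadic_unique Jm Jn.
- exact/Jt.
move/Jt: Jn; rewrite /J /= in_itv /= => /andP[t1 t2].
apply: lee_pmul; rewrite ?poweR_ge0 ?lee_fin ?invr_ge0 ?(ltW (s0 n)) //.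
  apply: lorentz_factor_le; rewrite ?mulr_ge0 ?(ltW t1) ?(ltW (s0 n)) //=.
  by rewrite measure_ge0 distribution_fun_nonincreasing.
by rewrite lef_pV2 ?posrE.
Qed.

Lemma lorentz_integral_le_dyadic_sum :
  lorentz_integral <= (2 `^ q)%:E * \sum_(n <oo) lorentz_term (dyadic n).
Proof.
have s0 n : (0 < dyadic n :> R)%R := dyadic_gt0 n.
pose J n : set R := [set` `]dyadic n, 2 * dyadic n]%R].
pose c n := ((2 * dyadic n)%:E * distribution_fun (dyadic n) `^ p^-1) `^ q *
            ((dyadic n)^-1)%:E.
have c0 n : 0 <= c n by rewrite mule_ge0 ?poweR_ge0 // lee_fin invr_ge0 (ltW (s0 n)).
rewrite -nneseriesZl; last by move=> n _; exact: lorentz_term_ge0.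
have -> : \sum_(n <oo) ((2 `^ q)%:E * lorentz_term (dyadic n)) =
    \sum_(n <oo) (c n * lebesgue_measure (J n)).
  apply: eq_eseriesr => n _; rewrite lebesgue_measure_itv_oc; last by have := s0 n; lra.
  rewrite /c lorentz_factorZ ?(ltW (s0 n)) // -/(lorentz_term _) -muleA -EFinM.
  by rewrite (_ : _ * _ = 1)%R ?mule1 //; field; rewrite gt_eqF.
rewrite -(ge0_integral_indic_series lebesgue_measure `]0%R, +oo[%classic) //; last 2 first.
- by move=> n; exact: measurable_itv.
- by move=> n; apply: itv_oc_subset_pos; rewrite ltW.
apply: ge0_le_integral_nonmeas => t /=; rewrite in_itv /= andbT => t0.
  by rewrite mule_ge0 ?lorentz_term_ge0 // lee_fin invr_ge0 ltW.
have [n Jn] := exists_dyadic _ t0.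
apply: le_trans (@nneseries_indic_ge _ _ J c n t c0 _); last by rewrite /J /= in_itv.
move: Jn => /andP[t1 t2].
apply: lee_pmul; rewrite ?poweR_ge0 ?lee_fin ?invr_ge0 ?(ltW t0) //.
  apply: lorentz_factor_le; rewrite ?(ltW t0) //= measure_ge0 /=.
  exact: distribution_fun_nonincreasing (ltW t1).
by rewrite lef_pV2 ?posrE // ltW.
Qed.

End lorentz_dyadic.

Section orlicz_dyadic.
Context {d} {Y : measurableType d} {R : realType} (nu : {measure set Y -> \bar R}).
Context {q : R} {Phi : R -> R}.
Hypotheses (q_gt0 : 0 < q) (Phi_young : young_function (fun t => Phi (t `^ q^-1))).

Definition dyadic_shell (g : Y -> R) (n : nat) : set Y :=
  [set y | dyadic n < `|g y| <= 2 * dyadic n].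

Lemma measurable_dyadic_shell (g : Y -> R) n : measurable_fun setT g ->
  measurable (dyadic_shell g n).
Proof.
move=> mg; rewrite -[S in measurable S]setTI.
have -> : dyadic_shell g n = (Num.norm \o g) @^-1` `]dyadic n, 2 * dyadic n].
  by apply/seteqP; split => y /=; rewrite in_itv.
exact: (measurableT_comp (@normr_measurable _ _) mg) (measurable_itv _).
Qed.

Local Open Scope ereal_scope.

Lemma orlicz_modular_le_dyadic_sum (g : Y -> R) (eps : R) :
  measurable_fun setT g -> (0 < eps)%R ->
  \int[nu]_(y in setT) (Phi (eps * `|g y|))%:E <=
  \sum_(n <oo) ((Phi (2 * eps * dyadic n))%:E * nu (dyadic_shell g n)).
Proof.
move=> mg e0; have c0 n : 0 <= (Phi (2 * eps * dyadic n))%:E.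
  by rewrite lee_fin (Phi_ge0 q_gt0 Phi_young) // !mulr_ge0 ?(ltW (dyadic_gt0 _)) ?ltW.
rewrite -(ge0_integral_indic_series nu setT) //; last first.
  by move=> n; exact: measurable_dyadic_shell.
apply: ge0_le_integral_nonmeas => y _.
  by rewrite lee_fin (Phi_ge0 q_gt0 Phi_young) // mulr_ge0 // ltW.
have [->|gy0] := eqVneq (g y) 0%R.
  rewrite normr0 mulr0 (Phi0 q_gt0 Phi_young).
  by apply: nneseries_ge0 => n _ _; rewrite mule_ge0 // lee_fin indic_ge0.
have [n Sn] : exists n, (dyadic n < `|g y| <= 2 * dyadic n)%R.
  by apply: exists_dyadic; rewrite normr_gt0.
apply: le_trans (nneseries_indic_ge (dyadic_shell g) _ n y c0 Sn); rewrite lee_fin.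
apply: (Phi_nondecreasing q_gt0 Phi_young); first by rewrite mulr_ge0 // ltW.
by move: Sn => /andP[_ gn]; rewrite [(2 * eps)%R]mulrC -mulrA ler_pM2l.
Qed.

Lemma orlicz_norm_le (g : Y -> R) (a : R) : (0 <= a)%R ->
  (forall lam, (a < lam)%R -> \int[nu]_(y in setT) (Phi (`|g y| / lam))%:E <= 1) ->
  orlicz_norm nu Phi g <= a%:E.
Proof.
move=> a0 ga; apply/lee_addgt0Pr => e e0; rewrite -EFinD.
apply: ereal_inf_lbound; exists (a + e)%R => //; split; first by rewrite ltr_wpDl.
by apply: ga; rewrite ltrDl.
Qed.

Lemma orlicz_norm_indic_lt (F : set Y) (a : R) : measurable F ->
  orlicz_norm nu Phi \1_F < a%:E -> (Phi a^-1)%:E * nu F <= 1.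
Proof.
move=> mF /ereal_inf_lt[_ [lam [lam0 Ilam] <-]]; rewrite lte_fin => lama.
have a0 : (0 < a)%R := lt_trans lam0 lama.
have Phi_a : (0 <= Phi a^-1)%R by rewrite (Phi_ge0 q_gt0 Phi_young) // invr_ge0 ltW.
have -> : nu F = \int[nu]_(y in setT) (\1_F y)%:E by rewrite integral_indic // setIT.
rewrite -ge0_integralZl_EFin //; last exact/measurable_EFinP/measurable_indic.
apply: le_trans Ilam; apply: ge0_le_integral_nonmeas => y _.
  by rewrite mule_ge0 // lee_fin.
rewrite indicE; case: (y \in F); rewrite ?normr1 ?normr0 ?mule1 ?mule0 lee_fin.
  rewrite div1r (Phi_nondecreasing q_gt0 Phi_young) ?invr_ge0 ?(ltW a0) //.
  by rewrite lef_pV2 ?posrE // ltW.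
by rewrite mul0r (Phi0 q_gt0 Phi_young).
Qed.

End orlicz_dyadic.

Section measure_bound_term.
Context {R : realType} {p q D : R} {Phi : R -> R}.
Hypotheses (p_gt0 : 0 < p) (q_gt0 : 0 < q) (D_ge1 : 1 <= D)
  (Phi_young : young_function (fun t => Phi (t `^ q^-1))).
Local Open Scope ereal_scope.

Let D_gt0 : (0 < D)%R. Proof. exact: lt_le_trans D_ge1. Qed.

Lemma Phi_measure_bound_lty (x : R) (M : \bar R) : 0 <= M -> M < +oo ->
  (Phi x)%:E * measure_bound Phi p D M < +oo.
Proof.
case: M => [r| |] // r0 _; rewrite /measure_bound; have [_|r_neq0] := eqVneq r 0%R.
  by rewrite mule0 ltey.
have r_gt0 : (0 < r)%R by rewrite lt0r r_neq0 -lee_fin.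
rewrite gt_eqF ?(Phi_gt0 q_gt0 Phi_young) -?EFinM ?ltey //.
by rewrite divr_gt0 ?mulr_gt0 ?powR_gt0.
Qed.

Lemma Phi_measure_bound_le (c s : R) (M : \bar R) : (0 < c)%R -> (0 < s)%R -> 0 <= M ->
  ((c * D) `^ q)%:E * (s%:E * M `^ p^-1) `^ q <= 1 ->
  (Phi (c * s))%:E * measure_bound Phi p D M <= ((c * D) `^ q)%:E * (s%:E * M `^ p^-1) `^ q.
Proof.
move=> c0 s0; case: M => [r| |] // r0; last first.
  rewrite poweRyr ?invr_eq0 ?gt_eqF // mulry gtr0_sg // mul1e.
  by rewrite poweRyr ?gt_eqF // mulry gtr0_sg ?powR_gt0 ?mulr_gt0 // mul1e leNgt ltey.
rewrite /measure_bound; have [->|r_neq0] := eqVneq r 0%R.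
  by move=> _; rewrite mule0 mule_ge0 ?lee_fin ?powR_ge0 ?poweR_ge0.
have r_gt0 : (0 < r)%R by rewrite lt0r r_neq0 -lee_fin.
set u := (1 / (D * r `^ p^-1))%R.
have u_gt0 : (0 < u)%R by rewrite divr_gt0 ?mulr_gt0 ?powR_gt0.
have Phi_u := Phi_gt0 q_gt0 Phi_young _ u_gt0.
set l := (c * D * (s * r `^ p^-1))%R.
have l_ge0 : (0 <= l)%R by rewrite !mulr_ge0 ?powR_ge0 // ltW.
rewrite gt_eqF //= -!EFinM !lee_fin.
rewrite -powRM ?mulr_ge0 ?powR_ge0 ?(ltW c0) ?(ltW s0) ?(ltW D_gt0) //.
rewrite -/l => lq1; have l1 : (l <= 1)%R.
  rewrite leNgt; apply/negP => /(gt0_ltr_powR q_gt0); rewrite !nnegrE powR1.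
  by move=> /(_ ler01 l_ge0); rewrite ltNge lq1.
have -> : (c * s = l * u)%R by rewrite /l /u; field; rewrite !gt_eqF ?powR_gt0.
by rewrite ler_pdivrMr // (Phi_scale q_gt0 Phi_young) ?l_ge0 // ltW.
Qed.

End measure_bound_term.

Section sufficiency.
Context {d1} {X : measurableType d1} {d2} {Y : measurableType d2} {R : realType}.
Context (mu : {measure set X -> \bar R}) (nu : {measure set Y -> \bar R}).
Context (tau : Y -> X) (p q D : R) (Phi : R -> R).
Hypotheses (mtau : measurable_fun setT tau) (p_gt0 : 0 < p) (q_gt0 : 0 < q)
  (D_ge1 : 1 <= D) (Phi_young : young_function (fun t => Phi (t `^ q^-1))).
Hypothesis nu_tau_le : forall E : set X, measurable E ->
  (nu (tau @^-1` E) <= measure_bound Phi p D (mu E))%E.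
Context (f : X -> R).
Hypothesis mf : measurable_fun setT f.
Local Open Scope ereal_scope.

Let D_gt0 : (0 < D)%R. Proof. exact: lt_le_trans D_ge1. Qed.
Let mg : measurable_fun setT (f \o tau). Proof. exact: measurableT_comp mf mtau. Qed.
Let b n := lorentz_term mu p q f (dyadic n).
Let b_ge0 n : 0 <= b n. Proof. exact: lorentz_term_ge0. Qed.
Let orlicz_term eps n :=
  (Phi (2 * eps * dyadic n))%:E * nu (dyadic_shell (f \o tau) n).

Let Phi_dyadic_ge0 eps n : (0 < eps)%R -> 0 <= (Phi (2 * eps * dyadic n))%:E.
Proof.
move=> e0; rewrite lee_fin (Phi_ge0 q_gt0 Phi_young) //.
by rewrite !mulr_ge0 ?(ltW e0) ?(ltW (dyadic_gt0 _)).
Qed.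

Let orlicz_term_ge0 eps n : (0 < eps)%R -> 0 <= orlicz_term eps n.
Proof. by move=> e0; rewrite mule_ge0 ?Phi_dyadic_ge0. Qed.

Let orlicz_term_le_bound eps n : (0 < eps)%R ->
  orlicz_term eps n <=
  (Phi (2 * eps * dyadic n))%:E * measure_bound Phi p D (distribution_fun mu f (dyadic n)).
Proof.
move=> e0; apply: lee_wpmul2l; first exact: Phi_dyadic_ge0.
apply: le_trans (nu_tau_le _ (measurable_superlevel f mf _)).
apply: le_measure; rewrite ?inE.
- exact: measurable_dyadic_shell mg.
- by rewrite -[S in measurable S]setTI; exact/mtau/measurable_superlevel.
by move=> y /andP[].
Qed.

Let orlicz_term_le eps n : (0 < eps)%R -> ((2 * eps * D) `^ q)%:E * b n <= 1 ->
  orlicz_term eps n <= ((2 * eps * D) `^ q)%:E * b n.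
Proof.
move=> e0 Kb; apply: le_trans (orlicz_term_le_bound eps n e0) _.
by apply: Phi_measure_bound_le => //; rewrite ?mulr_gt0 ?dyadic_gt0 ?measure_ge0.
Qed.

Let orlicz_term_lty eps n : (0 < eps)%R -> b n < +oo -> orlicz_term eps n < +oo.
Proof.
move=> e0 bn; apply: le_lt_trans (orlicz_term_le_bound eps n e0) _.
apply: (Phi_measure_bound_lty (q := q)) => //.
exact: distribution_fun_lty (dyadic_gt0 _) bn.
Qed.

Lemma orlicz_modular_lty eps : (0 < eps)%R -> \sum_(n <oo) b n < +oo ->
  \int[nu]_(y in setT) (Phi (eps * `|(f \o tau) y|))%:E < +oo.
Proof.
move=> e0 Sb; set K := ((2 * eps * D) `^ q)%R.
have K0 : (0 < K)%R by rewrite powR_gt0 // !mulr_gt0.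
apply: le_lt_trans (orlicz_modular_le_dyadic_sum nu q_gt0 Phi_young _ _ mg e0) _.
apply: (@nneseries_lty_near_le _ _ (fun n => K%:E * b n)).
- by move=> n; exact: orlicz_term_ge0.
- move=> n; apply: orlicz_term_lty => //.
  exact: le_lt_trans (term_le_nneseries _ n b_ge0) Sb.
- by move=> n; rewrite mule_ge0 // lee_fin ltW.
- by rewrite nneseriesZl ?lte_mul_pinfty ?lee_fin ?(ltW K0) // => n _.
have bK : \forall n \near \oo, b n < (K^-1)%:E.
  apply: (nneseries_term_cvg0 _ b_ge0 Sb (fun x => x < (K^-1)%:E)).
  by apply: open_ereal_lt'; rewrite lte_fin invr_gt0.
apply: filterS bK => n bn; apply: orlicz_term_le => //.
by rewrite -lee_pdivlMl // mule1 ltW.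
Qed.

Lemma orlicz_modular_le1 (w eps : R) : (0 < eps)%R -> (0 <= w)%R ->
  \sum_(n <oo) b n <= w%:E -> ((2 * eps * D) `^ q * w <= 1)%R ->
  \int[nu]_(y in setT) (Phi (eps * `|(f \o tau) y|))%:E <= 1.
Proof.
move=> e0 w0 Sb Kw; set K := ((2 * eps * D) `^ q)%R.
have K0 : (0 <= K)%R by exact: powR_ge0.
have KSb : K%:E * \sum_(n <oo) b n <= 1.
  by apply: le_trans (_ : K%:E * w%:E <= 1); rewrite ?lee_wpmul2l -?EFinM ?lee_fin.
apply: le_trans (orlicz_modular_le_dyadic_sum nu q_gt0 Phi_young _ _ mg e0) _.
apply: (le_trans _ KSb); rewrite -nneseriesZl //.
apply: lee_nneseries => [n _ _|n _]; first exact: orlicz_term_ge0.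
apply: orlicz_term_le => //; apply: le_trans KSb.
by rewrite lee_wpmul2l ?lee_fin // term_le_nneseries.
Qed.

Lemma composition_bounded_of_measure_bound : lorentz_norm mu p q f < +oo ->
  in_orlicz nu Phi (f \o tau) /\
  orlicz_norm nu Phi (f \o tau) <=
    (2 * D * ((2^-1) `^ q / 2)^-1 `^ q^-1)%:E * lorentz_norm mu p q f.
Proof.
set kap := ((2^-1) `^ q / 2)%R; set C := (2 * D * kap^-1 `^ q^-1)%R.
have kap0 : (0 < kap)%R by rewrite divr_gt0 ?powR_gt0 ?invr_gt0.
have C0 : (0 <= C)%R by rewrite !mulr_ge0 ?powR_ge0 ?(ltW D_gt0).
rewrite lorentz_normE => /lty_poweRy-/(_ (invr_neq0 (lt0r_neq0 q_gt0))).
have := dyadic_sum_le_lorentz_integral mu p q f p_gt0 q_gt0 mf.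
have := lorentz_integral_ge0 mu p q f.
case: (lorentz_integral mu p q f) => [i| |] // i0 Sb_le _; rewrite lee_fin in i0.
set w := (kap^-1 * i)%R.
have w0 : (0 <= w)%R by rewrite mulr_ge0 // invr_ge0 ltW.
have Sb : \sum_(n <oo) b n <= w%:E by rewrite EFinM lee_pdivlMl.
split.
  split; first exact: mg.
  by move=> eps e0; apply: orlicz_modular_lty => //; exact: le_lt_trans Sb (ltry _).
rewrite poweR_EFin -EFinM; apply: orlicz_norm_le; first by rewrite mulr_ge0 ?powR_ge0.
move=> lam lam_gt; have lam0 := le_lt_trans (mulr_ge0 C0 (powR_ge0 _ _)) lam_gt.
under eq_integral => y _ do rewrite mulrC.
apply: (orlicz_modular_le1 w) => //; first by rewrite invr_gt0.
have wK : ((w `^ q^-1) `^ q = w)%R by rewrite -powRrM mulVf ?gt_eqF // powRr1.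
rewrite -[Z in (_ * Z <= _)%R]wK.
rewrite -powRM ?powR_ge0 ?mulr_ge0 ?invr_ge0 ?(ltW lam0) ?(ltW D_gt0) //.
apply: powR_le1; first exact: ltW.
rewrite mulr_ge0 ?powR_ge0 ?mulr_ge0 ?invr_ge0 ?(ltW lam0) ?(ltW D_gt0) //=.
rewrite /w powRM ?invr_ge0 ?(ltW kap0) //.
have -> : (2 * lam^-1 * D * (kap^-1 `^ q^-1 * i `^ q^-1) = C * i `^ q^-1 / lam)%R.
  by rewrite /C; field; rewrite gt_eqF.
by rewrite ler_pdivrMr // mul1r ltW.
Qed.

End sufficiency.

Section lorentz_indicator.
Context {d} {X : measurableType d} {R : realType} (mu : {measure set X -> \bar R}).
Context (p q : R) (E : set X) (r : R).
Hypotheses (p_gt0 : 0 < p) (q_gt0 : 0 < q) (mE : measurable E) (muE : mu E = r%:E).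
Local Open Scope ereal_scope.

Let mI : measurable_fun setT (\1_E : X -> R). Proof. exact: measurable_indic. Qed.

Let rho_gt0 : (0 < 2 `^ (- q / 2) :> R)%R. Proof. by rewrite powR_gt0. Qed.
Let rho_lt1 : (2 `^ (- q / 2) < 1 :> R)%R.
Proof.
rewrite /powR pnatr_eq0 /= -[ltRHS]expR0 ltr_expR pmulr_llt0 ?ln_gt0 ?ltr1n //.
by rewrite mulNr oppr_lt0 divr_gt0.
Qed.

Lemma distribution_fun_indic_le (t : R) : (0 <= t)%R -> distribution_fun mu \1_E t <= r%:E.
Proof.
move=> t0; rewrite -muE; apply: le_measure; rewrite ?inE //.
  exact/measurable_superlevel/measurable_indic.
move=> x /=; rewrite indicE; case: (boolP (x \in E)) => [/set_mem //|_].
by rewrite normr0 ltNge t0.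
Qed.

Lemma distribution_fun_indic_eq0 (t : R) : (1 <= t)%R -> distribution_fun mu \1_E t = 0.
Proof.
move=> t1; rewrite /distribution_fun (_ : [set x | _] = set0) ?measure0 //.
apply/seteqP; split => x //=; rewrite indicE.
by case: (x \in E); rewrite ?normr1 ?normr0 => /(le_lt_trans t1); rewrite ?ltxx ?ltr10.
Qed.

Lemma lorentz_term_indic_le n :
  lorentz_term mu p q \1_E (dyadic n) <= ((r `^ p^-1) `^ q * (2 `^ (- q / 2)) ^+ n)%:E.
Proof.
have s0 : (0 < dyadic n :> R)%R := dyadic_gt0 n.
have [s1|s1] := ltrP (dyadic n : R) 1%R; last first.
  rewrite /lorentz_term distribution_fun_indic_eq0 // poweR0r ?invr_neq0 ?lt0r_neq0 //.
  by rewrite mule0 poweR0r ?lt0r_neq0 // lee_fin mulr_ge0 ?powR_ge0 ?exprn_ge0 ?ltW.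
apply: le_trans (_ : ((dyadic n)%:E * (r%:E) `^ p^-1) `^ q <= _).
  apply: lorentz_factor_le => //; rewrite ?lexx ?(ltW s0) //=.
  by rewrite measure_ge0 distribution_fun_indic_le ?ltW.
rewrite !poweR_EFin lee_fin powRM ?powR_ge0 ?(ltW s0) // mulrC.
by rewrite ler_wpM2l ?powR_ge0 // dyadic_lt1_powR // ltW.
Qed.

Lemma lorentz_norm_indic_le : lorentz_norm mu p q \1_E <=
  (r `^ p^-1 * (2 `^ q / (1 - 2 `^ (- q / 2))) `^ q^-1)%:E.
Proof.
set rho := (2 `^ (- q / 2))%R : R; set a := ((r `^ p^-1) `^ q)%R.
have rho1 : (0 <= 1 - rho)%R by rewrite subr_ge0 ltW.
have I_le : lorentz_integral mu p q \1_E <= (a * (2 `^ q / (1 - rho)))%:E.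
  apply: le_trans (lorentz_integral_le_dyadic_sum _ _ _ _ p_gt0 q_gt0 mI) _.
  rewrite mulrCA EFinM lee_wpmul2l ?lee_fin ?powR_ge0 //.
  apply: (le_trans _ (geometric_nneseries_le _ _ (powR_ge0 _ _) _)); last first.
    by rewrite rho_gt0 rho_lt1.
  apply: lee_nneseries => [n _ _|n _]; first exact: lorentz_term_ge0.
  exact: lorentz_term_indic_le.
have qi0 : (0 <= q^-1)%R by rewrite invr_ge0 ltW.
rewrite lorentz_normE.
apply: le_trans (ge0_lee_poweR _ _ _ qi0 (lorentz_integral_ge0 _ _ _ _) I_le) _.
rewrite poweR_EFin lee_fin powRM ?powR_ge0 ?divr_ge0 //.
by rewrite -powRrM mulfV ?gt_eqF // powRr1 ?powR_ge0.
Qed.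

End lorentz_indicator.

Section necessity.
Context {d1} {X : measurableType d1} {d2} {Y : measurableType d2} {R : realType}.
Context (mu : {measure set X -> \bar R}) (nu : {measure set Y -> \bar R}).
Context (tau : Y -> X) (p q C : R) (Phi : R -> R).
Hypotheses (mtau : measurable_fun setT tau)
  (tau_nonsingular : forall E : set X, measurable E -> mu E = 0%E -> nu (tau @^-1` E) = 0%E)
  (p_gt0 : 0 < p) (q_gt0 : 0 < q) (Phi_young : young_function (fun t => Phi (t `^ q^-1))).
Hypothesis composition_bounded : forall f : X -> R, in_lorentz mu p q f ->
  in_orlicz nu Phi (f \o tau) /\
  (orlicz_norm nu Phi (f \o tau) <= C%:E * lorentz_norm mu p q f)%E.
Local Open Scope ereal_scope.

Lemma measure_bound_of_composition_bounded : exists D : R, (1 <= D)%R /\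
  forall E : set X, measurable E -> nu (tau @^-1` E) <= measure_bound Phi p D (mu E).
Proof.
set K := ((2 `^ q / (1 - 2 `^ (- q / 2))) `^ q^-1)%R.
have K0 : (0 <= K)%R by exact: powR_ge0.
exists (1 + `|C| * K)%R; split => [|E mE]; first by rewrite lerDl mulr_ge0.
set D := (1 + `|C| * K)%R; have D_gt0 : (0 < D)%R by rewrite ltr_pwDl ?mulr_ge0.
case muE: (mu E) => [r| |]; rewrite /measure_bound ?leey //.
have [r0|r_neq0] := eqVneq r 0%R; first by rewrite tau_nonsingular // muE r0.
have r_gt0 : (0 < r)%R by rewrite lt0r r_neq0 -lee_fin -muE measure_ge0.
set u := (1 / (D * r `^ p^-1))%R.
have u_gt0 : (0 < u)%R by rewrite divr_gt0 ?mulr_gt0 ?powR_gt0.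
rewrite gt_eqF ?(Phi_gt0 q_gt0 Phi_young) //.
have N_le := lorentz_norm_indic_le mu p q E r p_gt0 q_gt0 mE muE.
have mI : measurable_fun setT (\1_E : X -> R) by exact: measurable_indic.
have [_ ON] := composition_bounded \1_E (conj mI (le_lt_trans N_le (ltry _))).
have : orlicz_norm nu Phi \1_(tau @^-1` E) < (D * r `^ p^-1)%:E.
  apply: le_lt_trans ON _.
  have := poweR_ge0 (lorentz_integral mu p q \1_E) q^-1; rewrite -lorentz_normE.
  move: N_le; case: (lorentz_norm mu p q \1_E) => [N| |] //; rewrite !lee_fin => N_le N0.
  rewrite -EFinM lte_fin; apply: le_lt_trans (ler_wpM2r N0 (ler_norm C)) _.
  apply: le_lt_trans (ler_wpM2l (normr_ge0 C) N_le) _.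
  have x0 : (0 < r `^ p^-1)%R by rewrite powR_gt0.
  rewrite /D -/K; nra.
have mF : measurable (tau @^-1` E) by rewrite -[S in measurable S]setTI; exact: mtau.
move/(orlicz_norm_indic_lt nu q_gt0 Phi_young _ _ mF).
by rewrite -div1r -/u -lee_pdivlMl ?(Phi_gt0 q_gt0 Phi_young) // mule1.
Qed.

End necessity.

Theorem theorem1p6 (R : realType)
  (d1 : measure_display) (X : measurableType d1)
  (d2 : measure_display) (Y : measurableType d2)
  (mu : {measure set X -> \bar R}) (nu : {measure set Y -> \bar R})
  (tau : Y -> X) (p q : R) (Phi : R -> R) :
  sigma_finite setT mu -> sigma_finite setT nu ->
  measurable_fun setT tau ->
  (forall E : set X, measurable E -> mu E = 0%E -> nu (tau @^-1` E) = 0%E) ->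
  0 < p -> 0 < q ->
  young_function (fun t => Phi (t `^ q^-1)) ->
  (exists C : R, forall f : X -> R, in_lorentz mu p q f ->
      in_orlicz nu Phi (f \o tau) /\
      (orlicz_norm nu Phi (f \o tau) <= C%:E * lorentz_norm mu p q f)%E)
  <->
  (exists D : R, 1 <= D /\
     forall E : set X, measurable E ->
       (nu (tau @^-1` E) <= measure_bound Phi p D (mu E))%E).
Proof.
move=> _ _ mtau tau_nonsingular p_gt0 q_gt0 Phi_young; split.
  by case=> C; exact: measure_bound_of_composition_bounded.
case=> D [D_ge1 nu_tau_le]; eexists => f [mf Nf].
exact: (composition_bounded_of_measure_bound mu nu tau p q D Phi mtau p_gt0 q_gt0 D_ge1
  Phi_young nu_tau_le f mf Nf).
Qed.
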